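(* Let $V=\{v_1,\dots,v_n\}$ be the cities of a symmetric TSP instance on the complete graph $K_n$ with nonnegative edge weights $w$. Let $I$ (white edges) and $X$ (excluded edges) be disjoint sets of edges, and let $g$ be a Hamiltonian cycle on $V$ that contains every edge of $I$ and no edge of $X$. Then the weight of the constrained 1-tree with respect to $(I,X)$ is at most the weight $w(g)=\sum_{e\in g}w(e)$.
   Context: The constrained 1-tree with respect to $(I,X)$ is built in two steps. (1) Constrained MST: run Prim's algorithm on the complete graph on $\{v_2,\dots,v_n\}$ with all edges of $X$ discarded, where any edge of $I$ crossing the current cut is given the highest priority (selected before any edge not in $I$) and the remaining candidate edges are ranked by weight. (2) Connect $v_1$ to this tree by two edges: every edge of $I$ incident with $v_1$ is selected regardless of cost, every edge of $X$ incident with $v_1$ is discarded, and the remaining edges incident with $v_1$ are selected in order of increasing weight until two edges incident with $v_1$ have been chosen. The constrained 1-tree is the union of the constrained MST and these two edges; its weight is the sum of its edge weights. In the paper's setting, $I$ and $X$ are the white and excluded edges of a Stem-and-Cycle configuration $c$ in an ejection chain, and $g$ is the goal tour toward which these constraints lead, which therefore contains all of $I$ and none of $X$. *)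

From mathcomp Require Import all_boot all_order all_algebra.
Set Implicit Arguments. Unset Strict Implicit. Unset Printing Implicit Defensive.
Import Order.TTheory GRing.Theory Num.Theory.
Local Open Scope ring_scope.

(* Cities: a finite type T; v1 : T is the distinguished city.
   Edges of K_n: 2-element subsets of T.  Edge sets: {set {set T}}. *)

Section TSP.
Variables (T : finType) (R : realDomainType).

Definition is_edge (e : {set T}) : bool := #|e| == 2%N.

Definition cycle_edges (s : seq T) : {set {set T}} :=
  [set [set x; next s x] | x in s].

Definition hamiltonian_cycle (g : {set {set T}}) : Prop :=
  exists s : seq T, [/\ uniq s, size s = #|T|, (3 <= #|T|)%N & g = cycle_edges s].

Definition weight_set (w : {set T} -> R) (g : {set {set T}}) : R :=
  \sum_(e in g) w e.

Variables (w : {set T} -> R) (v1 : T) (I X : {set {set T}}).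

(* Candidate edges of Prim's algorithm on K_n - v1 with X discarded,
   crossing the cut (C, complement) where C is the current tree's vertex set. *)
Definition crossing (C : {set T}) (f : {set T}) : bool :=
  [&& is_edge f, v1 \notin f, #|f :&: C| == 1%N & f \notin X].

Definition prim_step (C : {set T}) (e : {set T}) : bool :=
  crossing C e &&
  ((e \in I) ||
   [forall f : {set T}, crossing C f ==> (f \notin I) && (w e <= w f)]).

Fixpoint prim_valid (C : {set T}) (es : seq {set T}) : bool :=
  match es with
  | [::] => true
  | e :: es' => prim_step C e && prim_valid (C :|: e) es'
  end.

Definition tree_vertices (r : T) (es : seq {set T}) : {set T} :=
  r |: \bigcup_(e <- es) e.

(* es is the edge sequence (in selection order) output by a complete run of
   the constrained Prim algorithm on {v2,...,vn}, started at root r. *)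
Definition constrained_mst (r : T) (es : seq {set T}) : Prop :=
  [/\ r != v1, prim_valid [set r] es & tree_vertices r es = [set x | x != v1]].

(* S is the set of two edges joining v1 to the tree in step (2). *)
Definition v1_connection (S : {set {set T}}) : Prop :=
  [/\ #|S| = 2%N,
      (forall e, e \in S -> [&& is_edge e, v1 \in e & e \notin X]),
      (forall e, e \in I -> v1 \in e -> e \in S) &
      (forall e f, e \in S -> e \notin I ->
         is_edge f -> v1 \in f -> f \notin X -> f \notin I -> f \notin S ->
         w e <= w f)].

Definition constrained_one_tree (r : T) (es : seq {set T}) (S : {set {set T}}) : Prop :=
  constrained_mst r es /\ v1_connection S.

Definition one_tree_weight (es : seq {set T}) (S : {set {set T}}) : R :=
  \sum_(e <- es) w e + \sum_(e in S) w e.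

End TSP.

(* Compare the constrained 1-tree with g edge class by edge class.  Let E be
   the path g - v1: it spans V - v1, contains every edge of I avoiding v1 and no
   edge of X.  When Prim adds an edge e crossing the cut (C, V - C) and e is not
   in E, the E-path between the ends of e crosses the cut at some edge f.  As
   every edge of I avoiding v1 is in E, e is not in I, so the priority rule
   gives f \notin I and w e <= w f; exchanging f for e keeps E spanning,
   I-containing and X-free, does not increase its weight and keeps the edges
   inside C.  At the end of the run E contains the whole constrained MST.
   The two edges of g at v1 avoid X and contain every edge of I at v1, so the
   cheapest admissible completion of the forced v1-edges costs at most as much. *)

From mathcomp Require Import all_boot all_order all_algebra zify.
Set Implicit Arguments. Unset Strict Implicit. Unset Printing Implicit Defensive.
Import Order.TTheory GRing.Theory Num.Theory.
Local Open Scope ring_scope.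

Section Adjacency.
Variable T : finType.
Implicit Types (E : {set {set T}}) (C : {set T}).

Definition adj E : rel T := fun x y => [set x; y] \in E.

Lemma adj_sym E : symmetric (adj E).
Proof. by move=> x y; rewrite /adj setUC. Qed.

Lemma connect_adjC E x y : connect (adj E) x y = connect (adj E) y x.
Proof. exact: (sym_connect_sym (@adj_sym E)). Qed.

Lemma connect_adj_subset E E' x y :
  E \subset E' -> connect (adj E) x y -> connect (adj E') x y.
Proof.
by move=> sEE'; apply: connect_sub => u v uv; apply/connect1/(subsetP sEE').
Qed.

Lemma path_adj_setD E c d x p : c \notin x :: p ->
  path (adj E) x p -> path (adj (E :\ [set c; d])) x p.
Proof.
elim: p x => //= y p IHp x; rewrite inE negb_or => /andP[cx cyp] /andP[exy pp].
rewrite IHp // andbT /adj !inE -/(adj E x y) exy andbT.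
apply: contra cx => /eqP xy_cd; have : c \in [set x; y] by rewrite xy_cd set21.
by rewrite !inE => /orP[] // /eqP yc; rewrite -yc inE eqxx in cyp.
Qed.

Lemma cards1_set2I C c d : c \in C -> d \notin C -> #|[set c; d] :&: C| == 1%N.
Proof.
move=> cC dC; suff -> : [set c; d] :&: C = [set c] by rewrite cards1.
apply/setP => z; rewrite !inE; have [-> //|_] := eqVneq z c.
by case: eqVneq => [->|] //=; rewrite (negbTE dC).
Qed.

Lemma edge_cutP C e : is_edge e -> #|e :&: C| == 1%N ->
  exists a b, [/\ e = [set a; b], a \in C & b \notin C].
Proof.
move=> /cards2P [x [y [xy ->]]] cut.
have [xC|xC] := boolP (x \in C); have [yC|yC] := boolP (y \in C).
- suff : [set x; y] :&: C = [set x; y] by move=> xyC; rewrite xyC cards2 xy in cut.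
  by apply/setIidPl/subsetP => z; rewrite !inE => /orP[]/eqP->.
- by exists x, y.
- by exists y, x; rewrite setUC.
- suff : [set x; y] :&: C = set0 by move=> xyC; rewrite xyC cards0 in cut.
  by apply/setP => z; rewrite !inE; case: eqVneq => [->|_]; case: eqVneq => [->|_];
    rewrite ?(negbTE xC) ?(negbTE yC) ?andbF.
Qed.

(* A path leaving C crosses the cut at an edge [c; d]; uniqueness of the
   path lets both of its pieces avoid that edge. *)
Lemma path_cross_edge E C a p : path (adj E) a p -> uniq (a :: p) ->
  a \in C -> last a p \notin C ->
  exists c d, [/\ [set c; d] \in E, c \in C, d \notin C,
    connect (adj (E :\ [set c; d])) a c &
    connect (adj (E :\ [set c; d])) d (last a p)].
Proof.
elim: p a => [|x p IHp] a /=; first by move=> _ _ ->.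
move=> /andP[eax pp] /andP[anin up] aC lC.
have [xC|xC] := boolP (x \in C).
  have [c [d [cdE cC dC xc dl]]] := IHp x pp up xC lC.
  exists c, d; split => //; apply: connect_trans xc; apply: connect1.
  move: eax; rewrite /adj !inE => ->; rewrite andbT; apply: contraNneq dC => ax_cd.
  have : d \in [set a; x] by rewrite ax_cd set22.
  by rewrite !inE => /orP[] /eqP->.
exists a, x; split => //; apply/connectP; exists p => //.
exact: path_adj_setD.
Qed.

Lemma connect_cross_edge E C a b : connect (adj E) a b -> a \in C -> b \notin C ->
  exists c d, [/\ [set c; d] \in E, c \in C, d \notin C,
    connect (adj (E :\ [set c; d])) a c & connect (adj (E :\ [set c; d])) d b].
Proof.
move=> /connectP [p0 pp0 lp0]; case: (shortenP pp0) lp0 => p pp up _ -> aC lC.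
exact: path_cross_edge.
Qed.

Lemma connect_adj_exchange E a b c d x y : [set c; d] \in E ->
  connect (adj (E :\ [set c; d])) a c -> connect (adj (E :\ [set c; d])) d b ->
  connect (adj E) x y -> connect (adj ([set a; b] |: (E :\ [set c; d]))) x y.
Proof.
set f := [set c; d]; set E' := _ |: _ => fE ac db.
have sub : E :\ f \subset E' := subsetUr _ _.
have ca : connect (adj E') c a by apply: connect_adj_subset sub _; rewrite connect_adjC.
have ab : connect (adj E') a b by apply: connect1; rewrite /adj setU11.
have bd : connect (adj E') b d by apply: connect_adj_subset sub _; rewrite connect_adjC.
have cd := connect_trans ca (connect_trans ab bd).
apply: connect_sub => u v uv; have [uvf|uvf] := eqVneq [set u; v] f; last first.
  by apply: connect1; move: uv; rewrite /adj !inE uvf => ->; rewrite orbT.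
have : u \in f by rewrite -uvf set21.
have : v \in f by rewrite -uvf set22.
by rewrite !inE => /orP[]/eqP-> /orP[]/eqP->; rewrite ?connect0 // connect_adjC.
Qed.

End Adjacency.

Lemma ler_sum_seq_set (U : finType) (R : numDomainType) (F : U -> R)
    (s : seq U) (B : {pred U}) :
  uniq s -> {subset s <= B} -> {in B, forall x, 0 <= F x} ->
  \sum_(x <- s) F x <= \sum_(x in B) F x.
Proof.
move=> us sB F0; rewrite big_uniq // [X in _ <= X](bigID (mem s)) /=.
have -> : \sum_(x in B | x \in s) F x = \sum_(x in s) F x.
  by apply: eq_bigl => x; rewrite andb_idl // => /sB.
by rewrite lerDl sumr_ge0 // => x /andP[/F0].
Qed.

Lemma weight_set_split (T : finType) (R : realDomainType) (w : {set T} -> R)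
    (a : pred {set T}) (g : {set {set T}}) :
  weight_set w g = weight_set w [set e in g | ~~ a e] + weight_set w [set e in g | a e].
Proof.
rewrite /weight_set (bigID a) addrC /=.
by congr (_ + _); apply: eq_bigl => e; rewrite inE.
Qed.

Section Exchange.
Variables (T : finType) (R : realDomainType) (w : {set T} -> R)
  (v1 : T) (I X : {set {set T}}).
Implicit Types (E : {set {set T}}) (C : {set T}).

Definition feasible_subgraph E :=
  [/\ {in E, forall f : {set T}, [&& is_edge f, v1 \notin f & f \notin X]},
      {in I, forall f : {set T}, v1 \notin f -> f \in E} &
      forall x y, x != v1 -> y != v1 -> connect (adj E) x y].

Lemma prim_step_exchange C e E :
  prim_step w v1 I X C e -> feasible_subgraph E ->
  exists E1, [/\ feasible_subgraph E1, weight_set w E1 <= weight_set w E,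
    e \in E1 & {in E, forall f : {set T}, f \subset C -> f \in E1}].
Proof.
move=> /andP[cre pri] [Eedge EI Econn].
have [eE|eE] := boolP (e \in E); first by exists E; split.
have /and4P[ee v1e e1 eX] := cre.
have eI : e \notin I by apply: contra eE => eI; exact: EI.
have [a [b [ed aC bC]]] := edge_cutP ee e1.
have av : a != v1 by apply: contraNneq v1e => <-; rewrite ed set21.
have bv : b != v1 by apply: contraNneq v1e => <-; rewrite ed set22.
have [c [d [fE cC dC ac db]]] := connect_cross_edge (Econn _ _ av bv) aC bC.
set f := [set c; d] in fE ac db.
have /and3P [fe v1f fX] := Eedge _ fE.
have /andP [fI wef] : (f \notin I) && (w e <= w f).
  move: pri; rewrite (negbTE eI) => /forallP/(_ f)/implyP; apply.
  by rewrite /crossing fe v1f fX cards1_set2I.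
exists (e |: (E :\ f)); split.
- split.
  + by move=> g; rewrite !inE => /orP[/eqP->|/andP[_ /Eedge]] //; rewrite ee v1e eX.
  + move=> g gI gv; rewrite !inE EI // andbT orbC.
    by apply/orP; left; apply: contraNneq fI => <-.
  + by move=> x y xv yv; rewrite ed; apply: connect_adj_exchange fE ac db _; apply: Econn.
- rewrite /weight_set big_setU1 /=; last by rewrite !inE negb_and eE orbT.
  by rewrite [X in _ <= X](big_setD1 _ fE) lerD2r.
- exact: setU11.
- move=> g gE gC; rewrite !inE gE andbT orbC; apply/orP; left.
  by apply: contraNneq dC => gf; apply: (subsetP gC); rewrite gf set22.
Qed.

Lemma prim_valid_exchange C es E :
  prim_valid w v1 I X C es -> feasible_subgraph E ->
  exists E', [/\ feasible_subgraph E', weight_set w E' <= weight_set w E,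
    {subset es <= E'} & {in E, forall f : {set T}, f \subset C -> f \in E'}].
Proof.
elim: es C E => [|e es IHes] C E /=; first by exists E; split.
move=> /andP[st pv] fE.
have [E1 [fE1 w1 eE1 kE1]] := prim_step_exchange st fE.
have [E2 [fE2 w2 esE2 kE2]] := IHes _ _ pv fE1.
exists E2; split => //.
- exact: le_trans w2 w1.
- by move=> f; rewrite inE => /orP[/eqP->|/esE2] //; apply: kE2 => //; apply: subsetUr.
- move=> f fE' fC; apply: kE2; first exact: kE1.
  exact: subset_trans fC (subsetUl _ _).
Qed.

Lemma crossing_not_subset C e : crossing v1 X C e -> ~~ (e \subset C).
Proof.
by move=> /and4P[ee _ e1 _]; apply/negP => /setIidPl eC; rewrite eC (eqP ee) in e1.
Qed.

Lemma prim_valid_uniq C es : prim_valid w v1 I X C es ->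
  uniq es && all (fun e : {set T} => ~~ (e \subset C)) es.
Proof.
elim: es C => [|e es IHes] C //= /andP[/andP[cre _] pv].
have /andP[ues nsub] := IHes _ pv.
rewrite ues crossing_not_subset //= andbT; apply/andP; split.
  by apply/negP => /(allP nsub); rewrite subsetUr.
apply/allP => f /(allP nsub); apply: contra => fC.
exact: subset_trans fC (subsetUl _ _).
Qed.

Lemma prim_valid_weight_le C es E :
  (forall e, is_edge e -> 0 <= w e) ->
  prim_valid w v1 I X C es -> feasible_subgraph E ->
  \sum_(e <- es) w e <= weight_set w E.
Proof.
move=> w_ge0 pv fE; have [E' [[E'edge _ _] wE' esE' _]] := prim_valid_exchange pv fE.
have /andP[ues _] := prim_valid_uniq pv.
apply: le_trans (ler_sum_seq_set ues esE' _) wE' => f /E'edge /and3P[/w_ge0 //].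
Qed.

End Exchange.

Section PrimRun.
Variables (T : finType) (R : realDomainType) (w : {set T} -> R)
  (v1 : T) (I X : {set {set T}}).
Implicit Types (E : {set {set T}}) (C : {set T}).

Lemma prim_step_exists C f : crossing v1 X C f -> exists e, prim_step w v1 I X C e.
Proof.
move=> cf.
have [/existsP [e /andP[ce eI]]|noI] := boolP [exists e, crossing v1 X C e && (e \in I)].
  by exists e; rewrite /prim_step ce eI.
have [e ce emin] := @arg_minP _ _ _ f (crossing v1 X C) w cf.
exists e; rewrite /prim_step ce /=.
apply/orP; right; apply/forallP => f'; apply/implyP => cf'.
rewrite emin // andbT; apply: contraNN noI => f'I.
by apply/existsP; exists f'; rewrite cf' f'I.
Qed.

Lemma feasible_crossing E C r b : feasible_subgraph v1 I X E ->
  r \in C -> r != v1 -> b \notin C -> b != v1 -> exists f, crossing v1 X C f.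
Proof.
move=> [Eedge _ Econn] rC rv bC bv.
have [c [d [fE cC dC _ _]]] := connect_cross_edge (Econn _ _ rv bv) rC bC.
have /and3P [fe v1f fX] := Eedge _ fE.
by exists [set c; d]; rewrite /crossing fe v1f fX cards1_set2I.
Qed.

Lemma crossing_card_lt C e : crossing v1 X C e ->
  (#|[set x | x != v1] :\: (C :|: e)| < #|[set x | x != v1] :\: C|)%N.
Proof.
move=> /and4P[ee v1e e1 _]; have [a [b [ed _ bC]]] := edge_cutP ee e1.
apply/proper_card/properP; split; first by apply/setDS/subsetUl.
have bv : b != v1 by apply: contraNneq v1e => <-; rewrite ed set22.
by exists b; rewrite !inE ?bC ?bv // ed !inE eqxx !orbT.
Qed.

Lemma prim_run_exists E C r : feasible_subgraph v1 I X E ->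
  r \in C -> r != v1 -> C \subset [set x | x != v1] ->
  exists es, prim_valid w v1 I X C es /\ C :|: \bigcup_(e <- es) e = [set x | x != v1].
Proof.
move=> fE; move: {2}_.+1 (ltnSn #|[set x | x != v1] :\: C|) => n.
elim: n C => // n IHn C ltC rC rv CV.
have [VC|/subsetPn[b]] := boolP ([set x | x != v1] \subset C).
  by exists [::]; split => //; rewrite big_nil setU0; apply/eqP; rewrite eqEsubset CV.
rewrite inE => bv bC; have [f cf] := feasible_crossing fE rC rv bC bv.
have [e st] := prim_step_exists cf; have /and4P[_ v1e _ _] := (andP st).1.
have CeV : C :|: e \subset [set x | x != v1].
  by rewrite subUset CV; apply/subsetP => z ze; rewrite inE; apply: contraNneq v1e => <-.
have rCe : r \in C :|: e by rewrite inE rC.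
have [es [pv cov]] :=
  IHn (C :|: e) (leq_trans (crossing_card_lt (andP st).1) ltC) rCe rv CeV.
by exists (e :: es); rewrite /= st big_cons setUA.
Qed.

End PrimRun.

Section GreedySelection.
Variables (U : finType) (R : realDomainType) (w : U -> R).

Lemma greedy_subset (A : {set U}) k : (k <= #|A|)%N ->
  exists2 B : {set U}, B \subset A /\ #|B| = k &
    forall b f, b \in B -> f \in A :\: B -> w b <= w f.
Proof.
elim: k => [|k IHk] hk.
  by exists set0; [rewrite sub0set cards0 | move=> b f; rewrite inE].
have [B [BA cB] Bmin] := IHk (ltnW hk).
have /card_gt0P [x0 x0AB] : (0 < #|A :\: B|)%N.
  by rewrite cardsD (setIidPr BA) cB subn_gt0.
have [f0 f0AB f0min] := arg_minP w x0AB.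
have /setDP [f0A f0B] : f0 \in A :\: B := f0AB.
exists (f0 |: B); first by rewrite subUset sub1set f0A BA cardsU1 f0B cB.
move=> b f; rewrite !inE negb_or => /orP[/eqP->|bB] /andP[/andP[ff0 fB] fA].
  by apply: f0min; apply/setDP.
by apply: Bmin => //; apply/setDP.
Qed.

Lemma ler_sum_cards_eq (A B : {set U}) : #|A| = #|B| ->
  (forall a b, a \in A -> b \in B -> w a <= w b) ->
  \sum_(a in A) w a <= \sum_(b in B) w b.
Proof.
move: {2}#|A| (erefl #|A|) => n; elim: n A B => [|n IHn] A B cA cB AB.
  have /eqP-> : A == set0 by rewrite -cards_eq0 cA.
  by have /eqP-> : B == set0 by rewrite -cards_eq0 -cB cA.
have /card_gt0P [a aA] : (0 < #|A|)%N by rewrite cA.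
have /card_gt0P [b bB] : (0 < #|B|)%N by rewrite -cB cA.
rewrite (big_setD1 _ aA) (big_setD1 _ bB) /=; apply: lerD; first exact: AB.
apply: IHn.
- by move: cA; rewrite (cardsD1 a A) aA => -[].
- by move: cB; rewrite (cardsD1 a A) (cardsD1 b B) aA bB => -[].
- by move=> x y; rewrite !inE => /andP[_ xA] /andP[_ yB]; apply: AB.
Qed.

End GreedySelection.

Section V1Connection.
Variables (T : finType) (R : realDomainType) (w : {set T} -> R)
  (v1 : T) (I X : {set {set T}}).

Definition v1_candidates := [set f : {set T} | [&& is_edge f, v1 \in f & f \notin X]].
Definition v1_forced := [set f in I | v1 \in f].

Definition feasible_v1_pair (G : {set {set T}}) :=
  [/\ G \subset v1_candidates, v1_forced \subset G & #|G| = 2%N].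

Lemma v1_connection_exists (G : {set {set T}}) :
  {subset I <= @is_edge T} -> [disjoint I & X] -> feasible_v1_pair G ->
  exists S, v1_connection w v1 I X S.
Proof.
move=> Iedge dIX [GK IG cG].
have cI : (#|v1_forced| <= 2)%N by rewrite -cG subset_leq_card.
have hk : (2 - #|v1_forced| <= #|v1_candidates :\: v1_forced|)%N.
  have : (#|G :\: v1_forced| <= #|v1_candidates :\: v1_forced|)%N.
    exact/subset_leq_card/setSD.
  by rewrite cardsD (setIidPr IG) cG.
have [B [BK cB] Bmin] := greedy_subset w hk.
have IB : v1_forced :&: B = set0.
  apply/setP => f; rewrite !inE; apply/negbTE/negP => /andP[/andP[fI fv]].
  by move/(subsetP BK); rewrite !inE fI fv.
exists (v1_forced :|: B); split.
- by rewrite cardsU IB cards0 cB subn0; lia.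
- move=> e; rewrite inE => /orP[|/(subsetP BK)]; last by rewrite !inE => /andP[_ ->].
  rewrite inE => /andP[eI ->]; have ee : is_edge e := Iedge _ eI.
  by rewrite ee (disjointFr dIX eI).
- by move=> e eI ev; rewrite !inE eI ev.
- move=> e f; rewrite inE => /orP[eF|eB] eI; first by move: eF; rewrite inE (negbTE eI).
  move=> fe fv fX fI; rewrite inE negb_or => /andP[fI1 fB].
  by apply: Bmin => //; rewrite !inE fe fv fX fB andbT fI.
Qed.

Lemma v1_connection_weight_le (G S : {set {set T}}) :
  v1_connection w v1 I X S -> feasible_v1_pair G ->
  \sum_(e in S) w e <= weight_set w G.
Proof.
move=> [cS Sok SI Smin] [GK IG cG].
rewrite /weight_set (big_setID (A := S) G) (big_setID (A := G) S) setIC /= lerD2l.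
apply: ler_sum_cards_eq; first by rewrite !cardsD cS cG setIC.
move=> a b; rewrite !inE => /andP[aG aS] /andP[bS bG].
have aI : a \notin I.
  apply: contra aG => aI; apply: (subsetP IG); rewrite inE aI.
  by case/and3P: (Sok _ aS).
move: (subsetP GK _ bG); rewrite inE => /and3P[be bv bX].
by apply: Smin => //; apply: contra bS => bI; apply: SI.
Qed.

End V1Connection.

Lemma neq_next (T : eqType) (s : seq T) x : uniq s -> (1 < size s)%N ->
  x \in s -> x != next s x.
Proof.
case: s => // y p us szs xs; rewrite next_nth xs.
set i := index x (y :: p); have xi : nth y (y :: p) i = x by apply: nth_index.
have ilt : (i < size (y :: p))%N by rewrite index_mem.
rewrite -{1}xi; case: (ltnP i (size p)) => ip.
  by rewrite -[nth y p i]/(nth y (y :: p) i.+1) nth_uniq //; lia.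
rewrite [nth y p i]nth_default // -[X in _ != X]/(nth y (y :: p) 0) nth_uniq //=.
by rewrite -lt0n; apply: leq_trans ip.
Qed.

Lemma cycle_edges_is_edge (T : finType) (s : seq T) e :
  uniq s -> (1 < size s)%N -> e \in cycle_edges s -> is_edge e.
Proof. by move=> us szs /imsetP[x xs ->]; rewrite /is_edge cards2 neq_next. Qed.

Lemma mem_uniq_full (T : finType) (s : seq T) x : uniq s -> size s = #|T| -> x \in s.
Proof.
move=> us szs; have /subset_cardP sT : #|s| = #|T| by rewrite (card_uniqP us).
by rewrite (sT (subset_predT _)).
Qed.

Lemma hamiltonian_cycle_at (T : finType) (v1 : T) g : hamiltonian_cycle g ->
  exists h q, [/\ uniq (v1 :: h :: q), q != [::],
    forall x, x \in v1 :: h :: q & g = cycle_edges (v1 :: h :: q)].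
Proof.
move=> [s [us szs szT ->]].
case: (rot_to (mem_uniq_full v1 us szs)) => i s' rs.
have us' : uniq (v1 :: s') by rewrite -rs rot_uniq.
have szs' : size (v1 :: s') = #|T| by rewrite -rs size_rot.
case: s' rs us' szs' => [|h [|q0 q]] rs us' szs'; try by rewrite -szs' in szT.
exists h, (q0 :: q); split => //; first by move=> x; rewrite -rs mem_rot mem_uniq_full.
rewrite -rs /cycle_edges; apply/setP => e.
by apply/imsetP/imsetP => -[x xs ->]; exists x; rewrite ?mem_rot ?next_rot // -(mem_rot i).
Qed.

Section CycleThroughV1.
Variables (T : finType) (v1 h : T) (q : seq T).
Hypotheses (s_uniq : uniq (v1 :: h :: q)) (q_neq0 : q != [::])
  (s_full : forall x, x \in v1 :: h :: q).
Local Notation s := (v1 :: h :: q).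
Local Notation nx := (next s).

Lemma v1_notin_tail : v1 \notin h :: q.
Proof. by case/andP: s_uniq. Qed.

Lemma head_neq_v1 : h != v1.
Proof. by move: v1_notin_tail; rewrite inE negb_or eq_sym => /andP[]. Qed.

Lemma next_around_v1 : [/\ nx v1 = h, nx (last h q) = v1 & path (frel nx) h q].
Proof.
by have := cycle_next s_uniq; rewrite /= rcons_path => /and3P[/eqP ? ? /eqP ?].
Qed.

Lemma cycle_edges_connect x y : x != v1 -> y != v1 ->
  connect (adj [set e in cycle_edges s | v1 \notin e]) x y.
Proof.
set P := [set e in _ | _]; have [_ _ pq] := next_around_v1.
have hq : path (adj P) h q.
  apply: (@sub_in_path _ (predC1 v1) (frel nx)) pq; last first.
    by apply/allP => z zs /=; apply: contraNneq v1_notin_tail => <-.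
  move=> a b; rewrite !inE => av bv /eqP nab; rewrite /adj inE -nab.
  apply/andP; split; first by apply/imsetP; exists a.
  by rewrite !inE negb_or ![v1 == _]eq_sym av nab bv.
have hz z : z != v1 -> connect (adj P) h z.
  by move=> zv; apply: (path_connect hq); move: (s_full z); rewrite inE (negbTE zv).
by move=> xv yv; apply: connect_trans (hz _ yv); rewrite connect_adjC hz.
Qed.

Lemma cycle_edges_at_v1 :
  [set e in cycle_edges s | v1 \in e] = [set [set v1; h]; [set last h q; v1]].
Proof.
have [nv1 nl _] := next_around_v1.
apply/setP => e; rewrite !inE; apply/andP/orP.
  move=> [/imsetP [x xs ->]]; rewrite !inE => /orP[/eqP <-|/eqP nxv].
    by left; rewrite nv1.
  have xl : x = last h q by apply: (can_inj (prev_next s_uniq)); rewrite nl.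
  by right; rewrite xl nl.
move=> [/eqP->|/eqP->]; rewrite !inE eqxx ?orbT; split => //; apply/imsetP.
  by exists v1; rewrite ?nv1.
by exists (last h q); rewrite ?nl.
Qed.

Lemma card_cycle_edges_at_v1 : #|[set e in cycle_edges s | v1 \in e]| = 2.
Proof.
rewrite cycle_edges_at_v1 cards2; suff -> : [set v1; h] != [set last h q; v1] by [].
have hl : h != last h q.
  case: q q_neq0 s_uniq => // q0 q' _ /and3P[_ hq _].
  by apply: contraNneq hq => ->; rewrite /= mem_last.
apply/eqP => e12; have : h \in [set last h q; v1] by rewrite -e12 set22.
by rewrite !inE (negbTE hl) (negbTE head_neq_v1).
Qed.

Section Constraints.
Variables (I X : {set {set T}}).
Hypotheses (I_sub : I \subset cycle_edges s) (X_dis : [disjoint cycle_edges s & X]).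

Lemma feasible_cycle_edges :
  feasible_subgraph v1 I X [set e in cycle_edges s | v1 \notin e].
Proof.
split; last exact: cycle_edges_connect.
  move=> f; rewrite inE => /andP[fg ->].
  by rewrite (cycle_edges_is_edge _ _ fg) //= (disjointFr X_dis fg).
by move=> f fI fv; rewrite inE fv (subsetP I_sub _ fI).
Qed.

Lemma feasible_v1_pair_cycle_edges :
  feasible_v1_pair v1 I X [set e in cycle_edges s | v1 \in e].
Proof.
split; last exact: card_cycle_edges_at_v1.
  apply/subsetP => f; rewrite !inE => /andP[fg ->].
  by rewrite (cycle_edges_is_edge _ _ fg) //= (disjointFr X_dis fg).
by apply/subsetP => f; rewrite !inE => /andP[fI ->]; rewrite (subsetP I_sub _ fI).
Qed.

End Constraints.

End CycleThroughV1.

Unset Implicit Arguments.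

Theorem theorem1 (T : finType) (R : realDomainType) (w : {set T} -> R)
  (v1 : T) (I X g : {set {set T}}) :
  (forall e : {set T}, is_edge e -> 0 <= w e) ->
  {subset I <= @is_edge T} -> {subset X <= @is_edge T} ->
  [disjoint I & X] ->
  hamiltonian_cycle g ->
  I \subset g -> [disjoint g & X] ->
  (exists r es S, constrained_one_tree w v1 I X r es S) /\
  (forall r es S, constrained_one_tree w v1 I X r es S ->
     one_tree_weight w es S <= weight_set w g).
Proof.
move=> w_ge0 Iedge _ dIX /(hamiltonian_cycle_at v1)[h [q [us qn sfull ->]]] Ig dgX.
have fP := feasible_cycle_edges us sfull Ig dgX.
have fG := feasible_v1_pair_cycle_edges us qn sfull Ig dgX.
split.
  have hv := head_neq_v1 us.
  have hV : [set h] \subset [set x | x != v1] by rewrite sub1set inE.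
  have [es [pv cov]] := prim_run_exists w fP (set11 h) hv hV.
  have [S hS] := v1_connection_exists w Iedge dIX fG.
  by exists h, es, S.
move=> r es S [[_ pv _] hS].
rewrite /one_tree_weight (weight_set_split _ (fun e => v1 \in e)) lerD //.
  exact: prim_valid_weight_le w_ge0 pv fP.
exact: v1_connection_weight_le hS fG.
Qed.
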